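(* Let $\mathcal{G}_N$ be the Newton group of transformations of $\mathbb{R}^4=\mathbb{R}^3\times\mathbb{R}$ of the form $(\mathbf{x},x^4)\mapsto(S\mathbf{x},x^4)+b$ ($S\in SO(3)$, $b\in\mathbb{R}^4$), and $\mathcal{G}$ the Galilei group of transformations $x\mapsto\begin{pmatrix}S&w\\0^T&1\end{pmatrix}x+b$ ($S\in SO(3)$, $w\in\mathbb{R}^3$, $b\in\mathbb{R}^4$). Say an equivalence relation $\sim$ on $\mathbb{R}^4$ satisfies the causality condition if $x\sim y$ implies $x^4=y^4$ (causally connectible events, i.e. events with different time coordinate, are never equivalent). Then the only nontrivial $\mathcal{G}_N$-invariant (respectively, the only nontrivial $\mathcal{G}$-invariant) equivalence relation on $\mathbb{R}^4$ satisfying the causality condition is absolute simultaneity: $x\sim y\iff x^4=y^4$.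
   Context: An equivalence relation is invariant under a group of transformations if $x\sim y$ implies $h(x)\sim h(y)$ for all $x,y$ and all $h$ in the group. It is trivial if it is the total relation or the identity relation (diagonal). *)

From HB Require Import structures.
From mathcomp Require Import all_boot all_order all_algebra.
From mathcomp Require Import reals.
Set Implicit Arguments. Unset Strict Implicit. Unset Printing Implicit Defensive.
Import Order.TTheory GRing.Theory Num.Theory.
Local Open Scope ring_scope.

(* Points of R^4 = R^3 x R as column vectors of size 3+1; the last
   coordinate x^4 is the time coordinate. *)
Definition pt (R : realType) := 'cV[R]_(3 + 1).

Definition time (R : realType) (x : pt R) : R := x (rshift 3 (ord0 : 'I_1)) 0.

Definition SO3 (R : realType) (S : 'M[R]_3) : Prop :=
  S *m S^T = 1%:M /\ \det S = 1.

Definition newton_group (R : realType) (h : pt R -> pt R) : Prop :=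
  exists (S : 'M[R]_3) (b : pt R), SO3 S /\
    forall x, h x = block_mx S (0 : 'M[R]_(3,1)) (0 : 'M[R]_(1,3)) (1 : 'M[R]_1) *m x + b.

Definition galilei_group (R : realType) (h : pt R -> pt R) : Prop :=
  exists (S : 'M[R]_3) (w : 'cV[R]_3) (b : pt R), SO3 S /\
    forall x, h x = block_mx S w (0 : 'M[R]_(1,3)) (1 : 'M[R]_1) *m x + b.

Definition is_equivalence (T : Type) (E : T -> T -> Prop) : Prop :=
  (forall x, E x x) /\ (forall x y, E x y -> E y x) /\
  (forall x y z, E x y -> E y z -> E x z).

Definition invariant_under (T : Type) (G : (T -> T) -> Prop) (E : T -> T -> Prop) : Prop :=
  forall h, G h -> forall x y, E x y -> E (h x) (h y).

Definition trivial_rel (T : Type) (E : T -> T -> Prop) : Prop :=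
  (forall x y, E x y) \/ (forall x y, E x y <-> x = y).

Definition causal (R : realType) (E : pt R -> pt R -> Prop) : Prop :=
  forall x y, E x y -> time x = time y.

From HB Require Import structures.
From mathcomp Require Import all_boot all_order all_algebra.
From mathcomp Require Import reals ring lra.
From Stdlib Require Import Classical FunctionalExtensionality PropExtensionality.
Set Implicit Arguments. Unset Strict Implicit. Unset Printing Implicit Defensive.
Import Order.TTheory GRing.Theory Num.Theory.
Local Open Scope ring_scope.

(* Fix events p ~ q with p <> q.  Invariance under the Newton group and
   causality make W = {u in R^3 | (0,0) ~ (u,0)} an additive subgroup of R^3
   that is stable under SO(3) and contains the nonzero vector q - p.  Adding a
   vector of W to its half-turn image about the x-axis gives a nonzero vector
   (k,0,0) of W; adding to (k,0,0) - R_theta(k,0,0) its half-turn image gives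
   (2k(1 - cos theta),0,0), so W contains a segment of the x-axis, hence the
   whole axis, hence (rotating) all of R^3: simultaneous events are equivalent.
   Conversely simultaneity is Galilei-invariant because Galilei maps only
   translate time. *)

Section Coordinates.
Variable R : comPzRingType.

Definition v3 (a b c : R) : 'cV[R]_3 := \col_(i < 3) nth 0 [:: a; b; c] i.

Definition mx3 (a b c d e f g h k : R) : 'M[R]_3 :=
  \matrix_(i < 3, j < 3) nth 0 (nth [::] [:: [:: a; b; c]; [:: d; e; f]; [:: g; h; k]] i) j.

Local Ltac ord3 i := case: i => [[|[|[|?]]] ?] //=.

Lemma det_mx33 (A : 'M[R]_3) : \det A =
  A 0 0 * (A 1 1 * A 2 2 - A 1 2 * A 2 1) - A 0 1 * (A 1 0 * A 2 2 - A 1 2 * A 2 0)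
  + A 0 2 * (A 1 0 * A 2 1 - A 1 1 * A 2 0).
Proof.
pose B (i j : nat) := A (inord i) (inord j).
have hB (i j : 'I_3) : A i j = B i j by rewrite /B !inord_val.
rewrite (expand_det_row _ 0) !big_ord_recl big_ord0 /cofactor.
rewrite !(expand_det_row _ 0) !big_ord_recl !big_ord0 /cofactor !det_mx11 !mxE !hB /=.
rewrite /bump /=; ring.
Qed.

Lemma det_mx3 a b c d e f g h k : \det (mx3 a b c d e f g h k) =
  a * (e * k - f * h) - b * (d * k - f * g) + c * (d * h - e * g).
Proof. by rewrite det_mx33 !mxE. Qed.

Lemma mul_mx3_v3 a b c d e f g h k x y z :
  mx3 a b c d e f g h k *m v3 x y z = v3 (a * x + b * y + c * z) (d * x + e * y + f * z) (g * x + h * y + k * z).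
Proof.
apply/matrixP => i j; rewrite !mxE !big_ord_recl big_ord0 !mxE /=.
by ord3 i; rewrite /bump /= addr0 !addrA.
Qed.

Lemma mx3_trmx a b c d e f g h k : (mx3 a b c d e f g h k)^T = mx3 a d g b e h c f k.
Proof. by apply/matrixP => i j; rewrite !mxE; ord3 i; ord3 j. Qed.

Lemma mul_mx3 a b c d e f g h k a' b' c' d' e' f' g' h' k' :
  mx3 a b c d e f g h k *m mx3 a' b' c' d' e' f' g' h' k' =
  mx3 (a * a' + b * d' + c * g') (a * b' + b * e' + c * h') (a * c' + b * f' + c * k')
      (d * a' + e * d' + f * g') (d * b' + e * e' + f * h') (d * c' + e * f' + f * k')
      (g * a' + h * d' + k * g') (g * b' + h * e' + k * h') (g * c' + h * f' + k * k').
Proof.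
apply/matrixP => i j; rewrite !mxE !big_ord_recl big_ord0 !mxE /=.
by ord3 i; ord3 j; rewrite /bump /= addr0 !addrA.
Qed.

Lemma mx3_1 : 1%:M = mx3 1 0 0 0 1 0 0 0 1 :> 'M[R]_3.
Proof. by apply/matrixP => i j; rewrite !mxE; ord3 i; ord3 j. Qed.

Lemma v3E (u : 'cV[R]_3) : u = v3 (u 0 0) (u 1 0) (u 2 0).
Proof.
apply/matrixP => i j; rewrite !mxE (ord1 j).
pose B (k : nat) := u (inord k) 0.
have hB (k : 'I_3) : u k 0 = B k by rewrite /B inord_val.
rewrite !hB; ord3 i.
Qed.

Lemma v3_0 : v3 0 0 0 = 0.
Proof. by apply/matrixP => i j; rewrite !mxE; ord3 i. Qed.

Lemma v3D a b c a' b' c' : v3 a b c + v3 a' b' c' = v3 (a + a') (b + b') (c + c').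
Proof. by apply/matrixP => i j; rewrite !mxE; ord3 i. Qed.

Lemma v3N a b c : - v3 a b c = v3 (- a) (- b) (- c).
Proof. by apply/matrixP => i j; rewrite !mxE; ord3 i. Qed.

End Coordinates.

Section Rotations.
Variable R : realType.

Definition rotz (c s : R) : 'M[R]_3 := mx3 c (- s) 0 s c 0 0 0 1.
Definition flipx : 'M[R]_3 := mx3 1 0 0 0 (-1) 0 0 0 (-1).
Definition cycle3 : 'M[R]_3 := mx3 0 1 0 0 0 1 1 0 0.

Lemma SO3_rotz c s : c ^+ 2 + s ^+ 2 = 1 -> SO3 (rotz c s).
Proof.
move=> cs1; split; last by rewrite det_mx3; nra.
by rewrite mx3_trmx mul_mx3 mx3_1; congr mx3; nra.
Qed.

Lemma SO3_flipx : SO3 flipx.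
Proof.
split; last by rewrite det_mx3; ring.
by rewrite mx3_trmx mul_mx3 mx3_1; congr mx3; ring.
Qed.

Lemma SO3_cycle3 : SO3 cycle3.
Proof.
split; last by rewrite det_mx3; ring.
by rewrite mx3_trmx mul_mx3 mx3_1; congr mx3; ring.
Qed.

End Rotations.

Section RotationInvariantSubgroup.
Variables (R : realType) (W : 'cV[R]_3 -> Prop).
Hypothesis W0 : W 0.
Hypothesis WD : forall u v, W u -> W v -> W (u + v).
Hypothesis WN : forall u, W u -> W (- u).
Hypothesis WR : forall S u, SO3 S -> W u -> W (S *m u).

Local Notation W3 a b c := (W (v3 a b c)).

Lemma W_v3D a b c a' b' c' : W3 a b c -> W3 a' b' c' -> W3 (a + a') (b + b') (c + c').
Proof. by move=> h h'; rewrite -v3D; apply: WD. Qed.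

Lemma W_v3N a b c : W3 a b c -> W3 (- a) (- b) (- c).
Proof. by move=> h; rewrite -v3N; apply: WN. Qed.

Lemma W_rotz c s a b d : c ^+ 2 + s ^+ 2 = 1 -> W3 a b d ->
  W3 (c * a - s * b) (s * a + c * b) d.
Proof.
move=> cs1 h; have := WR (SO3_rotz cs1) h.
by rewrite mul_mx3_v3; congr W; congr v3; ring.
Qed.

Lemma W_flipx a b c : W3 a b c -> W3 a (- b) (- c).
Proof.
move=> h; have := WR (SO3_flipx R) h.
by rewrite mul_mx3_v3; congr W; congr v3; ring.
Qed.

Lemma W_cycle3 a b c : W3 a b c -> W3 b c a.
Proof.
move=> h; have := WR (SO3_cycle3 R) h.
by rewrite mul_mx3_v3; congr W; congr v3; ring.
Qed.

Lemma W_double_x a b c : W3 a b c -> W3 (a + a) 0 0.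
Proof. by move=> h; have := W_v3D h (W_flipx h); rewrite !subrr. Qed.

Lemma W_axis_norm k : W3 k 0 0 -> W3 `|k| 0 0.
Proof.
move=> h; have [k_ge0|k_lt0] := lerP 0 k; first by rewrite ger0_norm.
by rewrite ltr0_norm //; have := W_v3N h; rewrite oppr0.
Qed.

Lemma W_axis_of_nonzero u : u != 0 -> W u -> exists2 k, 0 < k & W3 k 0 0.
Proof.
rewrite [u]v3E; set a := u 0 0; set b := u 1 0; set c := u 2 0 => u_neq0 Wu.
suff [k k_neq0 Wk] : exists2 k, k != 0 & W3 k 0 0.
  by exists `|k|; [rewrite normr_gt0 | apply: W_axis_norm].
have [a0|a_neq0] := eqVneq a 0; last first.
  by exists (a + a); [rewrite -mulr2n mulrn_eq0 | apply: W_double_x Wu].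
have [b0|b_neq0] := eqVneq b 0; last first.
  by exists (b + b); [rewrite -mulr2n mulrn_eq0 | apply: W_double_x (W_cycle3 Wu)].
have [c0|c_neq0] := eqVneq c 0; last first.
  by exists (c + c); [rewrite -mulr2n mulrn_eq0 | apply: W_double_x (W_cycle3 (W_cycle3 Wu))].
by move: u_neq0; rewrite a0 b0 c0 v3_0 eqxx.
Qed.

Lemma W_axis_muln t n : W3 t 0 0 -> W3 (t *+ n) 0 0.
Proof.
move=> Wt; elim: n => [|n IH]; first by rewrite mulr0n v3_0.
by have := W_v3D Wt IH; rewrite mulrS !addr0.
Qed.

Section Segment.
Variable k : R.
Hypotheses (k_gt0 : 0 < k) (Wk : W3 k 0 0).

Lemma W_axis_interval t : 0 <= t <= k -> W3 t 0 0.
Proof.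
move=> /andP [t_ge0 t_lek].
have kk_neq0 : k + k != 0 by rewrite gt_eqF // addr_gt0.
(* The construction below yields [2k(1 - c)] for the cosine [c]. *)
pose c := 1 - t / (k + k).
have c2_le1 : 0 <= 1 - c ^+ 2.
  have u_ge0 : 0 <= t / (k + k) by rewrite divr_ge0 // ltW // addr_gt0.
  have u_le1 : t / (k + k) <= 1 by rewrite ler_pdivrMr ?addr_gt0 // mul1r; lra.
  by rewrite /c; nra.
pose s := Num.sqrt (1 - c ^+ 2).
have cs1 : c ^+ 2 + s ^+ 2 = 1 by rewrite sqr_sqrtr //; ring.
have := W_double_x (W_v3D Wk (W_v3N (W_rotz cs1 Wk))).
suff -> : (k + - (c * k - s * 0)) + (k + - (c * k - s * 0)) = t by [].
by rewrite /c; field.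
Qed.

Lemma W_axis_small t : `|t| <= k -> W3 t 0 0.
Proof.
have [t_ge0|t_lt0] := lerP 0 t.
  by rewrite ger0_norm // => t_lek; apply: W_axis_interval; rewrite t_ge0.
rewrite ltr0_norm // => t_lek.
have := W_v3N (W_axis_interval (t := - t) _); rewrite opprK oppr0; apply.
by rewrite t_lek oppr_ge0 ltW.
Qed.

Lemma W_axis t : W3 t 0 0.
Proof.
have bound_ge0 : 0 <= `|t| / k by rewrite divr_ge0 // ltW.
have := archi_boundP bound_ge0; set n := Num.Def.archi_bound _ => t_lt_nk.
have n_gt0 : 0 < n%:R :> R by apply: le_lt_trans t_lt_nk.
have small : `|t / n%:R| <= k.
  rewrite normrM normfV normr_nat ler_pdivrMr // mulrC.
  by move: t_lt_nk; rewrite ltr_pdivrMr // => /ltW.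
have := W_axis_muln n (W_axis_small small).
by rewrite -(mulr_natr (t / n%:R)) divfK // gt_eqF.
Qed.

End Segment.

Lemma rotation_invariant_subgroup_full u : u != 0 -> W u -> forall v, W v.
Proof.
move=> u_neq0 Wu v; have [k k_gt0 Wk] := W_axis_of_nonzero u_neq0 Wu.
have Wx := W_axis k_gt0 Wk (v 0 0).
have Wy := W_cycle3 (W_cycle3 (W_axis k_gt0 Wk (v 1 0))).
have Wz := W_cycle3 (W_axis k_gt0 Wk (v 2 0)).
by have := W_v3D Wx (W_v3D Wy Wz); rewrite !add0r !addr0 -v3E.
Qed.

End RotationInvariantSubgroup.

Section Spacetime.
Variable R : realType.

Definition simultaneity (x y : pt R) : Prop := time x = time y.

Definition spatial (u : 'cV[R]_3) : pt R := col_mx u 0.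

Definition galilei_mx (S : 'M[R]_3) (w : 'cV[R]_3) : 'M[R]_(3 + 1) :=
  block_mx S w 0 1.

Lemma time_col_mx (u : 'cV[R]_3) (t : 'cV[R]_1) : time (col_mx u t) = t 0 0.
Proof. by rewrite /time col_mxEd. Qed.

Lemma timeD (x y : pt R) : time (x + y) = time x + time y.
Proof. by rewrite /time mxE. Qed.

Lemma timeN (x : pt R) : time (- x) = - time x.
Proof. by rewrite /time mxE. Qed.

Lemma spatial_usubmx (z : pt R) : time z = 0 -> spatial (usubmx z) = z.
Proof.
move=> z0; rewrite -[RHS](vsubmxK z) /spatial; congr col_mx.
by apply/matrixP => i j; rewrite (ord1 i) (ord1 j) !mxE.
Qed.

Lemma galilei_mx_mul S w (u : 'cV[R]_3) (t : 'cV[R]_1) :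
  galilei_mx S w *m col_mx u t = col_mx (S *m u + w *m t) t.
Proof. by rewrite mul_block_col mul0mx mul1mx add0r. Qed.

Lemma time_galilei S w (x b : pt R) : time (galilei_mx S w *m x + b) = time x + time b.
Proof. by rewrite -(vsubmxK x) galilei_mx_mul timeD !time_col_mx. Qed.

Lemma newton_galilei (h : pt R -> pt R) : newton_group h -> galilei_group h.
Proof. by case=> S [b [SO3S hE]]; exists S, 0, b. Qed.

Lemma simultaneity_spec (G : (pt R -> pt R) -> Prop) :
  (forall h, G h -> galilei_group h) ->
  [/\ is_equivalence simultaneity, invariant_under G simultaneity,
      causal simultaneity & ~ trivial_rel simultaneity].
Proof.
move=> G_galilei; split.
- by rewrite /simultaneity; split=> //; split=> [x y ->|x y z -> ->].
- move=> h /G_galilei [S [w [b [_ hE]]]] x y xy.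
  by rewrite /simultaneity !hE !time_galilei xy.
- by [].
have time_e4 : time (col_mx 0 1%:M : pt R) = 1 by rewrite time_col_mx mxE.
case=> [total|identity].
  have := total 0 (col_mx 0 1%:M); rewrite /simultaneity time_e4 /time mxE.
  by move/eqP; rewrite eq_sym oner_eq0.
have e1 : spatial (const_mx 1) <> 0.
  move/(congr1 (fun z : pt R => z (lshift 1 0) 0)).
  by rewrite /spatial col_mxEu !mxE => /eqP; rewrite oner_eq0.
by apply/e1/identity; rewrite /simultaneity /spatial time_col_mx /time !mxE.
Qed.

Section NewtonInvariant.
Variable E : pt R -> pt R -> Prop.
Hypotheses (Eeq : is_equivalence E) (Einv : invariant_under (@newton_group R) E).

Lemma E_translate x y c : E x y -> E (x + c) (y + c).
Proof.
have translation : newton_group (fun z : pt R => z + c).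
  exists 1%:M, c; split; first by split; rewrite ?trmx1 ?mulmx1 ?det1.
  by move=> z; rewrite -(scalar_mx_block 3 1 1) mul1mx.
exact: Einv translation x y.
Qed.

Lemma E_rotate S x y : SO3 S -> E x y -> E (galilei_mx S 0 *m x) (galilei_mx S 0 *m y).
Proof.
move=> SO3S; have rotation : newton_group (fun z => galilei_mx S 0 *m z).
  by exists S, 0; split=> // z; rewrite addr0.
exact: Einv rotation x y.
Qed.

Lemma newton_invariant_simultaneity p q : E p q -> p <> q -> time p = time q ->
  forall x y, simultaneity x y -> E x y.
Proof.
case: Eeq => Erefl [Esym Etrans] Epq p_neq_q tpq.
pose W u := E 0 (spatial u).
have W0 : W 0 by rewrite /W /spatial col_mx0.
have WD u v : W u -> W v -> W (u + v).
  move=> Wu Wv; apply: Etrans Wu _.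
  by have := E_translate (spatial u) Wv; rewrite add0r /spatial add_col_mx addr0 addrC.
have WN u : W u -> W (- u).
  move=> Wu; apply: Esym.
  by have := E_translate (- spatial u) Wu; rewrite add0r subrr /spatial opp_col_mx oppr0.
have WR S u : SO3 S -> W u -> W (S *m u).
  move=> SO3S Wu; have := E_rotate SO3S Wu.
  by rewrite mulmx0 /spatial galilei_mx_mul mulmx0 addr0.
have tqp : time (q - p) = 0 by rewrite timeD timeN tpq subrr.
have Wqp : W (usubmx (q - p)).
  by rewrite /W spatial_usubmx //; have := E_translate (- p) Epq; rewrite subrr.
have qp_neq0 : usubmx (q - p) != 0.
  apply: contra_notN p_neq_q => /eqP qp0; apply/esym/eqP; rewrite -subr_eq0.
  by rewrite -(spatial_usubmx tqp) qp0 /spatial col_mx0.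
move=> x y txy; have tyx : time (y - x) = 0 by rewrite timeD timeN txy subrr.
have := E_translate x (rotation_invariant_subgroup_full W0 WD WN WR qp_neq0 Wqp (usubmx (y - x))).
by rewrite spatial_usubmx // add0r subrK.
Qed.

End NewtonInvariant.

Lemma newton_causal_nontrivial_simultaneity (E : pt R -> pt R -> Prop) :
  is_equivalence E -> invariant_under (@newton_group R) E -> causal E -> ~ trivial_rel E ->
  forall x y, E x y <-> simultaneity x y.
Proof.
move=> Eeq Einv Ecausal Enontriv.
have [p [q [Epq p_neq_q]]] : exists p q, E p q /\ p <> q.
  apply: NNPP => no_pair; apply: Enontriv; right=> p q; split; last by move=> ->; case: Eeq.
  by move=> Epq; apply: NNPP => p_neq_q; apply: no_pair; exists p, q.
move=> x y; split; first exact: Ecausal.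
exact: (@newton_invariant_simultaneity E Eeq Einv p q Epq p_neq_q (Ecausal p q Epq) x y).
Qed.

End Spacetime.

Theorem proposition3p11 (R : realType) :
  (forall E : pt R -> pt R -> Prop,
     (is_equivalence E /\ invariant_under (@newton_group R) E /\ causal E /\
      ~ trivial_rel E)
     <-> (forall x y, E x y <-> time x = time y))
  /\
  (forall E : pt R -> pt R -> Prop,
     (is_equivalence E /\ invariant_under (@galilei_group R) E /\ causal E /\
      ~ trivial_rel E)
     <-> (forall x y, E x y <-> time x = time y)).
Proof.
have simultaneity_eq (E : pt R -> pt R -> Prop) :
    (forall x y, E x y <-> time x = time y) -> E = @simultaneity R.
  by move=> hE; do 2!apply: functional_extensionality => ?; apply: propositional_extensionality.
split=> E; split.
- by case=> Eeq [Einv [Ecausal Enontriv]]; apply: newton_causal_nontrivial_simultaneity.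
- by move/simultaneity_eq ->; case: (simultaneity_spec (@newton_galilei R)).
- case=> Eeq [Einv [Ecausal Enontriv]]; apply: newton_causal_nontrivial_simultaneity => //.
  by move=> h /newton_galilei; apply: Einv.
- by move/simultaneity_eq ->; case: (@simultaneity_spec R (@galilei_group R) (fun _ => id)).
Qed.
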